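(* Let $\lambda>0$, $d_v>0$, $m=\lambda\pi d_v^2$, and suppose $\epsilon\ge d_v$. Then the range-vector localizability probability equals the localizability probability based on the number of visible landmarks: $$\mathbb P\big[\Delta_p(\mathbf R_{\mathbf 0},\mathbf R_{\mathbf x})>\epsilon\big]=\mathbb P[N_{\mathbf 0}\neq N_{\mathbf x}]=1-e^{-2m}I_0(2m).$$
   Context: Following the paper's model, the landmarks seen from the origin $\mathbf 0$ and those seen from a second location $\mathbf x\in\mathbb R^2$ are given by two independent homogeneous Poisson point processes $\Phi_{\mathbf 0}$ and $\Phi_{\mathbf x}$ on $\mathbb R^2$ of intensity $\lambda$. A landmark is visible from a location if its Euclidean distance to that location is at most $d_v$. $N_{\mathbf 0}$ (resp. $N_{\mathbf x}$) is the number of visible landmarks of $\Phi_{\mathbf 0}$ from $\mathbf 0$ (resp. of $\Phi_{\mathbf x}$ from $\mathbf x$). The range vector $\mathbf R_{\mathbf 0}\in\mathbb R^{N_{\mathbf 0}}$ lists the distances from $\mathbf 0$ to its visible landmarks ordered clockwise by bearing from a fixed reference direction; $\mathbf R_{\mathbf x}\in\mathbb R^{N_{\mathbf x}}$ is defined likewise relative to $\mathbf x$. For real vectors, $\Delta_p(\mathbf u,\mathbf v)=\|\mathbf u-\mathbf v\|_\infty$ if $\dim\mathbf u=\dim\mathbf v$ (equal to $0$ when both are empty) and $\infty$ otherwise. $I_0$ is the modified Bessel function of the first kind of order zero. *)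

From HB Require Import structures.
From mathcomp Require Import all_boot all_order all_algebra.
From mathcomp Require Import all_classical all_reals all_analysis.
From mathcomp Require Import finmap.
Set Implicit Arguments. Unset Strict Implicit. Unset Printing Implicit Defensive.
Import Order.TTheory GRing.Theory Num.Theory.
Import numFieldNormedType.Exports.
Local Open Scope classical_set_scope.
Local Open Scope ring_scope.

Section landmarks.
Context {R : realType}.

Definition pt := (R * R)%type.

Definition edist (p q : pt) : R :=
  Num.sqrt ((p.1 - q.1) ^+ 2 + (p.2 - q.2) ^+ 2).

Definition bounded2 (B : set pt) : Prop :=
  exists r : R, B `<=` [set p | `|p.1| <= r /\ `|p.2| <= r].

Definition count_in (A B : set pt) : nat := #|` fset_set (A `&` B)|%fset.

Definition leb2 := (@lebesgue_measure R \x @lebesgue_measure R)%E.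

Definition poisson_mass (r : R) (k : nat) : R := r ^+ k / k`!%:R * expR (- r).

Definition count_event {d} {T : measurableType d} (Phi : T -> set pt)
  (n : nat) (B : 'I_n -> set pt) (k : 'I_n -> nat) : set T :=
  \bigcap_(i in [set: 'I_n]) [set w | count_in (Phi w) (B i) = k i].

Definition homogeneous_PPP {d} {T : measurableType d} (P : probability T R)
  (lam : R) (Phi : T -> set pt) : Prop :=
  (forall w B, bounded2 B -> finite_set (Phi w `&` B)) /\
  (forall B (k : nat), measurable B -> bounded2 B ->
     measurable [set w | count_in (Phi w) B = k]) /\
  (forall (n : nat) (B : 'I_n -> set pt) (k : 'I_n -> nat),
     (forall i, measurable (B i) /\ bounded2 (B i)) ->
     (forall i j, i != j -> B i `&` B j = set0) ->
     P (count_event Phi B k) =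
       (\prod_(i < n) poisson_mass (lam * fine (leb2 (B i))) (k i))%:E).

(* two point processes are independent: the sigma-algebras generated by
   their counting variables on bounded Borel sets are independent *)
Definition independent_pp {d} {T : measurableType d} (P : probability T R)
  (Phi Psi : T -> set pt) : Prop :=
  forall (n m : nat) (B : 'I_n -> set pt) (k : 'I_n -> nat)
         (C : 'I_m -> set pt) (l : 'I_m -> nat),
    (forall i, measurable (B i) /\ bounded2 (B i)) ->
    (forall j, measurable (C j) /\ bounded2 (C j)) ->
    P (count_event Phi B k `&` count_event Psi C l) =
      (P (count_event Phi B k) * P (count_event Psi C l))%E.

Definition vis_disk (c : pt) (dv : R) : set pt := [set p | edist c p <= dv].

Definition nvis (A : set pt) (c : pt) (dv : R) : nat := count_in A (vis_disk c dv).

(* bearing of p seen from c, measured clockwise from the reference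
   direction (positive first axis), in [0, 2pi) *)
Definition bearing (c p : pt) : R :=
  let u := p.1 - c.1 in let v := p.2 - c.2 in
  if v <= 0 then acos (u / edist c p) else 2 * pi - acos (u / edist c p).

(* clockwise order by bearing (ties, impossible for distinct points off c,
   broken by distance) *)
Definition cw_le (c : pt) (p q : pt) : bool :=
  (bearing c p < bearing c q) ||
  ((bearing c p == bearing c q) && (edist c p <= edist c q)).

Definition range_vec (A : set pt) (c : pt) (dv : R) : seq R :=
  map (edist c) (sort (cw_le c) (enum_fset (fset_set (A `&` vis_disk c dv)))).

Definition Delta_p (u v : seq R) : \bar R :=
  if size u == size v then
    (\big[Num.max/0]_(ab <- zip u v) `|ab.1 - ab.2|)%:E
  else +oo%E.

Definition besselI0 (x : R) : R :=
  limn (series (fun k : nat => (x / 2) ^+ (2 * k) / (k`!%:R) ^+ 2)).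

End landmarks.

From HB Require Import structures.
From mathcomp Require Import all_boot all_order all_algebra.
From mathcomp Require Import all_classical all_reals all_analysis.
From mathcomp Require Import finmap.
From mathcomp Require Import ring lra.
Import Order.TTheory GRing.Theory Num.Theory.
Import numFieldNormedType.Exports.
Local Open Scope classical_set_scope.
Local Open Scope ring_scope.

(** Every entry of a range vector lies in [[0, dv]], so two range vectors of
    the same dimension are at [Delta_p]-distance at most [dv <= eps], while
    vectors of different dimensions are at distance [+oo]: the event
    [Delta_p > eps] is exactly [N_0 <> N_x].  The two counts are independent
    Poisson variables with the same mean [m = lam |disk|], so
    [P[N_0 = N_x] = sum_k (e^-m m^k / k!)^2 = e^-2m I_0(2m)]. *)

Section disk.
Context {R : realType}.

Lemma vis_disk_sqrE (c p : R * R) (r : R) : 0 <= r ->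
  vis_disk c r p <-> (c.1 - p.1) ^+ 2 + (c.2 - p.2) ^+ 2 <= r ^+ 2.
Proof.
move=> r0; rewrite /vis_disk /edist /=.
by rewrite -{1}(ger0_norm r0) -sqrtr_sqr ler_sqrt ?sqr_ge0.
Qed.

Lemma measurable_vis_disk (c : R * R) (r : R) : 0 <= r ->
  measurable (vis_disk c r).
Proof.
move=> r0.
have -> : vis_disk c r =
    (fun p : R * R => (c.1 - p.1) ^+ 2 + (c.2 - p.2) ^+ 2) @^-1` `]-oo, r ^+ 2].
  by apply/seteqP; split => p /=; rewrite in_itv /= => /(vis_disk_sqrE c p r r0).
rewrite -[X in measurable X]setTI.
apply: (_ : measurable_fun setT _) => //.
apply: measurable_realfun.measurable_funD.
  apply: measurable_realfun.measurable_funX.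
  apply: measurable_realfun.measurable_funB => //; exact: measurable_fst.
apply: measurable_realfun.measurable_funX.
apply: measurable_realfun.measurable_funB => //; exact: measurable_snd.
Qed.

Lemma bounded2_vis_disk (c : R * R) (r : R) : 0 <= r -> bounded2 (vis_disk c r).
Proof.
move=> r0; exists (`|c.1| + `|c.2| + r) => p /(vis_disk_sqrE c p r r0) pD.
have {}pD : `|c.1 - p.1| <= r /\ `|c.2 - p.2| <= r.
  rewrite -(ger0_norm r0) -!sqrtr_sqr !ler_sqrt ?sqr_ge0 //.
  by have := sqr_ge0 (c.1 - p.1); have := sqr_ge0 (c.2 - p.2); split; lra.
case: pD; rewrite !ler_norml => /andP[a1 a2] /andP[b1 b2].
have := ler_norm c.1; have := ler_norm c.2.
have := ler_norm (- c.1); have := ler_norm (- c.2); rewrite !normrN.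
by split; rewrite ler_norml; apply/andP; split; lra.
Qed.

Lemma integral_cos2_pihalf (k : R) :
  (\int[@lebesgue_measure R]_(x in [set` `[(- (pi / 2)) : R, pi / 2]%R])
     (k * cos x ^+ 2)%:E = (k * (pi / 2))%:E)%E.
Proof.
pose F : R -> R := ((@id R) + sin * cos) * cst (k / 2).
have dF (x : R) : is_derive x (1 : R) F (k * cos x ^+ 2).
  apply: is_derive_eq.
  rewrite scaler0 add0r /cst /GRing.scale /=.
  by rewrite mulrN -!expr2 sin2cos2; field.
have cF (x : R) : {for x, continuous F}.
  by apply: differentiable_continuous; apply/derivable1_diffP; case: (dF x).
have pi2 : (0 < pi / 2 :> R) by rewrite divr_gt0 // pi_gt0.
rewrite (@continuous_FTC2 _ _ F).
- by rewrite /F /cst !fctE /= sinN cosN cos_pihalf -EFinD; congr (_%:E); field.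
- lra.
- apply: continuous_subspaceT => x.
  exact: continuousM (@cst_continuous _ _ k x)
    (continuousM (@continuous_cos R x) (@continuous_cos R x)).
- split.
  + by move=> x _; case: (dF x).
  + exact: cvg_at_right_filter (cF _).
  + exact: cvg_at_left_filter (cF _).
- by move=> x _; rewrite derive1E; case: (dF x).
Qed.

(* The substitution [x = c + r sin t] turns the semicircle into [2 r^2 cos^2]. *)
Lemma integral_semicircle (c r : R) : 0 < r ->
  (\int[@lebesgue_measure R]_(x in [set` `[c - r, c + r]%R])
      (2 * Num.sqrt (r ^+ 2 - (x - c) ^+ 2))%:E = (pi * r ^+ 2)%:E)%E.
Proof.
move=> r0.
pose F : R -> R := cst c + cst r * sin.
pose G : R -> R := fun x => 2 * Num.sqrt (r ^+ 2 - (x - c) ^+ 2).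
have dF (x : R) : is_derive x (1 : R) F (r * cos x).
  by apply: is_derive_eq; rewrite /cst /GRing.scale /= add0r mulr0 addr0.
have F'E : F^`()%classic = fun x => r * cos x.
  by apply/funext => x; rewrite derive1E; case: (dF x).
have cF (x : R) : {for x, continuous F}.
  by apply: differentiable_continuous; apply/derivable1_diffP; case: (dF x).
have cF' (x : R) : {for x, continuous (F^`()%classic)}.
  rewrite F'E; apply: continuousM; first exact: cst_continuous.
  exact: continuous_cos.
have pi2 : (0 < pi / 2 :> R) by rewrite divr_gt0 // pi_gt0.
have Fa : F (- (pi / 2)) = c - r by rewrite /F !fctE /cst sinN sin_pihalf mulrN1.
have Fb : F (pi / 2) = c + r by rewrite /F !fctE /cst sin_pihalf mulr1.
have := @integration_by_substitution_increasing R F G (- (pi / 2)) (pi / 2).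
rewrite Fa Fb => ->.
- rewrite (_ : pi * r ^+ 2 = 2 * r ^+ 2 * (pi / 2)); last by field.
  rewrite -integral_cos2_pihalf; apply: eq_integral => x.
  rewrite in_setE /= in_itv /= => /cos_ge0_pihalf cx.
  rewrite F'E /G /F !fctE /cst; congr (_%:E).
  have -> : r ^+ 2 - (c + r * sin x - c) ^+ 2 = (r * cos x) ^+ 2.
    by rewrite addrAC subrr add0r !exprMn sin2cos2; ring.
  rewrite sqrtr_sqr ger0_norm; last exact: mulr_ge0 (ltW r0) cx.
  by ring.
- lra.
- by move=> x y xI yI xy; rewrite /F !fctE /cst ltrD2l ltr_pM2l // ltr_sin.
- by move=> x _; apply: cF'.
- by apply/cvg_ex; exists (F^`()%classic (- (pi / 2)));
    exact: cvg_at_right_filter (cF' _).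
- by apply/cvg_ex; exists (F^`()%classic (pi / 2));
    exact: cvg_at_left_filter (cF' _).
- split.
  + by move=> x _; case: (dF x).
  + exact: cvg_at_right_filter (cF _).
  + exact: cvg_at_left_filter (cF _).
- apply: continuous_subspaceT => x.
  pose q : R -> R := cst (r ^+ 2) - (id - cst c) * (id - cst c).
  have cq : {for x, continuous q}.
    by apply: differentiable_continuous; apply/derivable1_diffP.
  have -> : G = cst 2 \* (Num.sqrt \o q) by [].
  apply: continuousM; first exact: cst_continuous.
  exact: continuous_comp cq (@sqrt_continuous _ _).
Qed.

Lemma lebesgue_measure_xsection_vis_disk (c : R * R) (r t : R) : 0 <= r ->
  @lebesgue_measure R (xsection (vis_disk c r) t) =
  (2 * Num.sqrt (r ^+ 2 - (t - c.1) ^+ 2))%:E.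
Proof.
move=> r0; set q := r ^+ 2 - (t - c.1) ^+ 2.
have memE y : xsection (vis_disk c r) t y <-> (y - c.2) ^+ 2 <= q.
  rewrite /xsection /= in_setE (vis_disk_sqrE _ _ _ r0) /q /=.
  by rewrite [(c.1 - t) ^+ 2]sqrrB [(t - c.1) ^+ 2]sqrrB
             [(c.2 - y) ^+ 2]sqrrB [(y - c.2) ^+ 2]sqrrB; split => h; lra.
have [q0|q0] := ltP q 0.
  have -> : xsection (vis_disk c r) t = set0.
    by apply/seteqP; split => y //= /memE; have := sqr_ge0 (y - c.2); lra.
  by rewrite measure0 ltr0_sqrtr // mulr0.
have -> : xsection (vis_disk c r) t =
    [set` `[c.2 - Num.sqrt q, c.2 + Num.sqrt q]%R].
  apply/seteqP; split => y /=; rewrite in_itv /=.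
    by move/memE; rewrite -ler_sqrt // sqrtr_sqr ler_norml => /andP[? ?];
      apply/andP; split; lra.
  move=> /andP[? ?]; apply/memE.
  by rewrite -ler_sqrt // sqrtr_sqr ler_norml; apply/andP; split; lra.
rewrite lebesgue_measure_itv /= lte_fin.
have sq0 := sqrtr_ge0 q.
case: ifPn => [_|]; first by rewrite -EFinD; congr (_%:E); ring.
rewrite -leNgt => sq_le0.
by rewrite (_ : Num.sqrt q = 0) ?mulr0 //; lra.
Qed.

Lemma leb2_vis_disk (c : R * R) (r : R) : 0 < r ->
  leb2 (vis_disk c r) = (pi * r ^+ 2)%:E.
Proof.
move=> r0; rewrite /leb2 /product_measure1 /=.
under eq_integral do rewrite lebesgue_measure_xsection_vis_disk ?(ltW r0) //.
rewrite -(integral_semicircle c.1 r r0) [RHS]integral_mkcond.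
apply: eq_integral => t _; rewrite patchE; case: ifPn => // /negP.
rewrite in_setE /= in_itv /= => /negP; rewrite negb_and -!ltNge => t_out.
rewrite ler0_sqrtr ?mulr0 // subr_le0.
by case/orP: t_out => ?; nra.
Qed.

End disk.

Lemma mem_fset_set (T : choiceType) (A : set T) (x : T) :
  x \in fset_set A -> A x.
Proof.
have [fA|nfA] := pselect (finite_set A); first by rewrite in_fset_set // in_setE.
by rewrite /fset_set; case: pselect.
Qed.

Section range_vector.
Context {R : realType}.
Implicit Types (A : set (R * R)) (c : R * R) (u v : seq R).

Lemma size_range_vec A c dv : size (range_vec A c dv) = nvis A c dv.
Proof. by rewrite size_map size_sort. Qed.

Lemma range_vec_bound A c dv r : r \in range_vec A c dv -> 0 <= r <= dv.
Proof.
case/mapP => p; rewrite mem_sort => /mem_fset_set [_ pD] ->.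
by rewrite sqrtr_ge0 pD.
Qed.

Lemma Delta_p_le u v (b : R) : 0 <= b -> size u = size v ->
  (forall r, r \in u -> 0 <= r <= b) -> (forall r, r \in v -> 0 <= r <= b) ->
  (Delta_p u v <= b%:E)%E.
Proof.
move=> b0 suv ub vb; rewrite /Delta_p suv eqxx lee_fin big_seq.
apply: (big_ind (fun y => y <= b)) => // [y z yb zb|[a a'] /= aa'].
  by rewrite ge_max yb zb.
have /ub ? : a \in u.
  by have := map_f fst aa'; rewrite -/(unzip1 _) unzip1_zip ?suv.
have /vb ? : a' \in v.
  by have := map_f snd aa'; rewrite -/(unzip2 _) unzip2_zip ?suv.
by rewrite ler_norml; apply/andP; split; lra.
Qed.

Lemma Delta_p_range_vec_gt A B c c' {dv eps} : 0 <= dv -> dv <= eps ->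
  (eps%:E < Delta_p (range_vec A c dv) (range_vec B c' dv))%E <->
  nvis A c dv <> nvis B c' dv.
Proof.
move=> dv0 dv_eps; split => [Delta_gt AB|AB].
  have Delta_le : (Delta_p (range_vec A c dv) (range_vec B c' dv) <= eps%:E)%E.
    apply: (@le_trans _ _ dv%:E); last by rewrite lee_fin.
    by apply: Delta_p_le; rewrite ?size_range_vec //; exact: range_vec_bound.
  by move: Delta_gt; rewrite ltNge Delta_le.
by rewrite /Delta_p !size_range_vec; move/eqP/negbTE: AB => ->; exact: ltry.
Qed.

End range_vector.

Lemma eseries_EFin (R : realType) (u : nat -> R) : cvgn (series u) ->
  (\sum_(0 <= k <oo) (u k)%:E)%E = (limn (series u))%:E.
Proof.
move=> cu; rewrite -EFin_lim //; congr (limn _); apply/funext => n /=.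
by rewrite sumEFin.
Qed.

(* The [k]-th term of the Bessel series is [e^{2m} (e^{-m} m^k / k!)^2]; it is
   dominated by the exponential series of [m^2]. *)
Lemma eseries_poisson_mass_sqr (R : realType) (m : R) :
  (\sum_(0 <= k <oo) ((poisson_mass m k) ^+ 2)%:E)%E =
  (expR (- (2 * m)) * besselI0 (2 * m))%:E.
Proof.
rewrite /besselI0 (_ : 2 * m / 2 = m); last by field.
pose b k := m ^+ (2 * k) / (k`!%:R) ^+ 2.
have b0 k : 0 <= b k by rewrite /b exprM divr_ge0 ?sqr_ge0 // exprn_ge0 ?sqr_ge0.
have cb : cvgn (series b).
  apply: (@series_le_cvg _ b (exp_coeff (m ^+ 2))) => //.
  - by move=> n; rewrite /exp_coeff /= divr_ge0 // exprn_ge0 ?sqr_ge0.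
  - move=> n; rewrite /b /exp_coeff /= exprM expr2 invfM mulrA.
    by rewrite ler_piMr ?invf_le1 ?mulr_ge0 ?invr_ge0 ?exprn_ge0 ?sqr_ge0 ?ler1n
      ?fact_gt0.
  - exact: is_cvg_series_exp_coeff.
transitivity (\sum_(0 <= k <oo) ((expR (- (2 * m)))%:E * (b k)%:E))%E.
  apply: eq_eseriesr => k _; rewrite -EFinM; congr (_%:E).
  rewrite /poisson_mass /b (_ : - (2 * m) = - m + - m); last by ring.
  rewrite expRD exprM [m ^+ 2 ^+ k]exprAC.
  have : k`!%:R != 0 :> R by rewrite pnatr_eq0 -lt0n fact_gt0.
  by move: (m ^+ k) (k`!%:R) (expR (- m)) => y z e z0; field.
transitivity ((expR (- (2 * m)))%:E * \sum_(0 <= k <oo) (b k)%:E)%E.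
  by apply: nneseriesZl => k _; rewrite lee_fin.
by rewrite eseries_EFin // -EFinM.
Qed.

Section poisson_counts.
Context {R : realType} {d : measure_display} {T : measurableType d}
  {P : probability T R}.
Implicit Types (Phi Psi : T -> set (R * R)) (B C : set (R * R)).

Lemma count_event1 Phi B k :
  count_event Phi (fun _ : 'I_1 => B) (fun _ => k) =
  [set w | count_in (Phi w) B = k].
Proof. by rewrite /count_event bigcap_const //; exists ord0. Qed.

Lemma measurable_count_in lam Phi B k : homogeneous_PPP P lam Phi ->
  measurable B -> bounded2 B -> measurable [set w | count_in (Phi w) B = k].
Proof. by case=> _ [mPhi _]; exact: mPhi. Qed.

Lemma homogeneous_PPP_count lam Phi B k : homogeneous_PPP P lam Phi ->
  measurable B -> bounded2 B ->
  P [set w | count_in (Phi w) B = k] =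
  (poisson_mass (lam * fine (leb2 B)) k)%:E.
Proof.
case=> _ [_ PPhi] mB bB; rewrite -count_event1.
rewrite (PPhi 1%N (fun=> B) (fun=> k)) ?big_ord1 //.
by move=> i j; rewrite (ord1 i) (ord1 j) eqxx.
Qed.

Lemma independent_pp_count Phi Psi B C k l : independent_pp P Phi Psi ->
  measurable B -> bounded2 B -> measurable C -> bounded2 C ->
  P ([set w | count_in (Phi w) B = k] `&` [set w | count_in (Psi w) C = l]) =
  (P [set w | count_in (Phi w) B = k] * P [set w | count_in (Psi w) C = l])%E.
Proof.
move=> indep mB bB mC bC; rewrite -!count_event1.
exact: (indep 1%N 1%N (fun=> B) (fun=> k) (fun=> C) (fun=> l)).
Qed.

Lemma count_in_eq_bigcup Phi Psi B C :
  [set w | count_in (Phi w) B = count_in (Psi w) C] =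
  \bigcup_k ([set w | count_in (Phi w) B = k] `&`
             [set w | count_in (Psi w) C = k]).
Proof.
apply/seteqP; split => w /=; last by case=> k _ [/= -> ->].
by move=> BC; exists (count_in (Phi w) B).
Qed.

Section two_processes.
Context {lam mu : R} {Phi Psi : T -> set (R * R)} {B C : set (R * R)}.
Hypotheses (PPhi : homogeneous_PPP P lam Phi) (PPsi : homogeneous_PPP P mu Psi).
Hypothesis indep : independent_pp P Phi Psi.
Hypotheses (mB : measurable B) (bB : bounded2 B).
Hypotheses (mC : measurable C) (bC : bounded2 C).

Let F k := [set w | count_in (Phi w) B = k] `&` [set w | count_in (Psi w) C = k].

Let measurable_F k : measurable (F k).
Proof.
by apply: measurableI; [exact: measurable_count_in PPhi _ _|
                        exact: measurable_count_in PPsi _ _].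
Qed.

Lemma prob_count_in_eq :
  P [set w | count_in (Phi w) B = count_in (Psi w) C] =
  (\sum_(0 <= k <oo) (poisson_mass (lam * fine (leb2 B)) k *
                      poisson_mass (mu * fine (leb2 C)) k)%:E)%E.
Proof.
have tF : trivIset setT F by move=> i j _ _ [w [[/= <- _] [/= <- _]]].
rewrite count_in_eq_bigcup (measure_semi_bigcup _ measurable_F tF); last first.
  exact: bigcup_measurable (fun k _ => measurable_F k).
apply: eq_eseriesr => k _.
rewrite EFinM -(homogeneous_PPP_count _ _ _ k PPhi mB bB).
rewrite -(homogeneous_PPP_count _ _ _ k PPsi mC bC).
exact: independent_pp_count.
Qed.

Lemma prob_count_in_neq :
  P [set w | count_in (Phi w) B <> count_in (Psi w) C] =
  (1 - \sum_(0 <= k <oo) (poisson_mass (lam * fine (leb2 B)) k *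
                          poisson_mass (mu * fine (leb2 C)) k)%:E)%E.
Proof.
rewrite -prob_count_in_eq -probability_setC; last first.
  rewrite count_in_eq_bigcup.
  exact: bigcup_measurable (fun k _ => measurable_F k).
by congr (P _); apply/seteqP; split => w.
Qed.

End two_processes.
End poisson_counts.

Theorem corollary1 (R : realType) (d : measure_display) (T : measurableType d)
  (P : probability T R) (lam dv eps : R) (x : R * R)
  (Phi0 Phix : T -> set (R * R)) :
  0 < lam -> 0 < dv -> dv <= eps ->
  homogeneous_PPP P lam Phi0 -> homogeneous_PPP P lam Phix ->
  independent_pp P Phi0 Phix ->
  let m := lam * pi * dv ^+ 2 in
  P [set w | (eps%:E < Delta_p (range_vec (Phi0 w) (0%R, 0%R) dv)
                               (range_vec (Phix w) x dv))%E]
    = P [set w | nvis (Phi0 w) (0%R, 0%R) dv <> nvis (Phix w) x dv] /\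
  P [set w | nvis (Phi0 w) (0%R, 0%R) dv <> nvis (Phix w) x dv]
    = (1 - expR (- (2 * m)) * besselI0 (2 * m))%:E.
Proof.
move=> _ dv0 dv_eps PPP0 PPPx indep m.
have dv_ge0 := ltW dv0.
split.
  have Delta_gtE w := Delta_p_range_vec_gt (Phi0 w) (Phix w) 0 x dv_ge0 dv_eps.
  by congr (P _); apply/seteqP; split => w /Delta_gtE.
have disk c : measurable (vis_disk c dv) /\ bounded2 (vis_disk c dv).
  by split; [exact: measurable_vis_disk | exact: bounded2_vis_disk].
rewrite /nvis (prob_count_in_neq PPP0 PPPx indep (disk _).1 (disk _).2
                 (disk _).1 (disk _).2).
rewrite !leb2_vis_disk //= mulrA -/m.
under eq_eseriesr do rewrite -expr2.
by rewrite eseries_poisson_mass_sqr -EFinB.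
Qed.
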